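(* Let $x^\star\in(0,1]$ and $F_f(y;x^\star)=\frac{ye^{(x^\star-2)y}+ye^{-x^\star y}}{2(1-e^{-2y})}$ for $y>0$. Then $F_f(\cdot;x^\star)$ is strictly decreasing on $(1/x^\star,\infty)$. *)

From Stdlib Require Import Reals Lra.
Open Scope R_scope.

Definition F_f (xs y : R) : R :=
  (y * exp ((xs - 2) * y) + y * exp (- xs * y)) / (2 * (1 - exp (-2 * y))).

(* Writing e^{(x-2)y} = e^{-(2-x)y}, F_f(y; x) is the average of
   g_c(y) = y e^{-cy} / (1 - e^{-2y}) for c = x and c = 2 - x.  For cy > 1 the
   factor y e^{-cy} is strictly decreasing (because 1 + u < e^u) while
   1 - e^{-2y} is positive and increasing, so g_c is strictly decreasing on
   (1/c, oo).  Since x <= 1 <= 2 - x, both g_x and g_{2-x} decrease on (1/x, oo). *)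

From Stdlib Require Import Reals Lra Psatz.
Open Scope R_scope.

Definition exp_ratio (c y : R) : R := y * exp (- c * y) / (1 - exp (-2 * y)).

Lemma one_sub_exp_pos (y : R) : 0 < y -> 0 < 1 - exp (-2 * y).
Proof.
  intros hy.
  assert (exp (-2 * y) < exp 0) by (apply exp_increasing; lra).
  rewrite exp_0 in *; lra.
Qed.

Lemma one_sub_exp_increasing (y1 y2 : R) :
  y1 < y2 -> 1 - exp (-2 * y1) < 1 - exp (-2 * y2).
Proof.
  intros hy.
  assert (exp (-2 * y2) < exp (-2 * y1)) by (apply exp_increasing; lra).
  lra.
Qed.

Lemma mul_exp_decreasing (c y1 y2 : R) :
  0 < c -> 1 < c * y1 -> y1 < y2 -> y2 * exp (- c * y2) < y1 * exp (- c * y1).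
Proof.
  intros hc0 hcy hy.
  assert (hc : 0 < c * (y2 - y1)) by nra.
  assert (hsplit : exp (- c * y1) = exp (- c * y2) * exp (c * (y2 - y1)))
    by (rewrite <- exp_plus; f_equal; ring).
  rewrite hsplit.
  assert (hE := exp_pos (- c * y2)).
  assert (hK : 1 + c * (y2 - y1) < exp (c * (y2 - y1))) by (apply exp_ineq1; lra).
  assert (hy1 : 0 < y1) by nra.
  assert (y2 < y1 * exp (c * (y2 - y1))) by nra.
  nra.
Qed.

Lemma exp_ratio_decreasing (c y1 y2 : R) :
  0 < c -> 1 < c * y1 -> y1 < y2 -> exp_ratio c y2 < exp_ratio c y1.
Proof.
  intros hc hcy hy.
  assert (hy1 : 0 < y1) by nra.
  assert (hD1 := one_sub_exp_pos y1 hy1).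
  assert (hD := one_sub_exp_increasing y1 y2 hy).
  assert (hN := mul_exp_decreasing c y1 y2 hc hcy hy).
  assert (hN2 : 0 < y2 * exp (- c * y2)) by (apply Rmult_lt_0_compat; [lra | apply exp_pos]).
  unfold exp_ratio.
  apply Rle_lt_trans with (y2 * exp (- c * y2) / (1 - exp (-2 * y1))).
  - apply Rmult_le_compat_l; [lra |].
    apply Rinv_le_contravar; lra.
  - apply Rmult_lt_compat_r; [apply Rinv_0_lt_compat |]; lra.
Qed.

Lemma F_f_average (x y : R) :
  0 < y -> F_f x y = (exp_ratio x y + exp_ratio (2 - x) y) / 2.
Proof.
  intros hy.
  assert (hD := one_sub_exp_pos y hy).
  unfold F_f, exp_ratio.
  replace ((x - 2) * y) with (- (2 - x) * y) by ring.
  field; lra.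
Qed.

Theorem mainTheorem9 (xs : R) (hxs0 : 0 < xs) (hxs1 : xs <= 1) :
  forall y1 y2 : R, 1 / xs < y1 -> y1 < y2 -> F_f xs y2 < F_f xs y1.
Proof.
  intros y1 y2 h1 h2.
  assert (hxy : 1 < xs * y1).
  { apply (Rmult_lt_compat_l xs) in h1; [| lra].
    replace (xs * (1 / xs)) with 1 in h1 by (field; lra).
    exact h1. }
  assert (hy1 : 0 < y1) by nra.
  rewrite !F_f_average by lra.
  assert (exp_ratio xs y2 < exp_ratio xs y1)
    by (apply exp_ratio_decreasing; lra).
  assert (exp_ratio (2 - xs) y2 < exp_ratio (2 - xs) y1)
    by (apply exp_ratio_decreasing; nra).
  lra.
Qed.
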